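(* Let $m\ge 1$, $M=2^m$, and let $P_{C_0}(0),\ldots,P_{C_{m-1}}(0)\in(0,1)$ be given, with $P_{C_k}(1)=1-P_{C_k}(0)$. Then for all $j,l\in\{0,\ldots,M-1\}$, $$\sum_{i=0}^{M-1}\gamma_{i,l}\gamma_{i,j}=\begin{cases}M,& j=l,\\ 0,& j\neq l,\end{cases}\qquad\text{and}\qquad \sum_{i=0}^{M-1}h_{l,i}\gamma_{i,j}=M\,h_{j,l}\sqrt{P_{j\oplus l}}.$$
   Context: For an integer $0\le i\le M-1$, $n_{i,k}\in\{0,1\}$ denotes the $k$-th bit of its base-2 representation, i.e. $i=\sum_{k=0}^{m-1}n_{i,k}2^k$; for a bit $b$, $\bar b=1-b$. For integers $i,j$, $i\oplus j$ denotes their bitwise exclusive-or. The symbol probabilities are $P_i=\prod_{k=0}^{m-1}P_{C_k}(n_{i,k})$. The Hadamard coefficients are $h_{i,j}=\prod_{k=0}^{m-1}(-1)^{n_{i,k}n_{j,k}}$. The coefficients $\gamma_{i,j}$ are defined by $$\gamma_{i,j}=\prod_{k=0}^{m-1}\Big[(-1)^{\bar n_{i,k}n_{j,k}}\sqrt{P_{C_k}(0)}+(-1)^{n_{i,k}\bar n_{j,k}}\sqrt{P_{C_k}(1)}\Big].$$ *)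

(* R is an arbitrary real closed field (rcfType), so that
   Num.sqrt is available; the real numbers are an instance. *)
From HB Require Import structures.
From mathcomp Require Import all_boot all_order all_algebra.
Set Implicit Arguments. Unset Strict Implicit. Unset Printing Implicit Defensive.
Import Order.TTheory GRing.Theory Num.Theory.
Local Open Scope ring_scope.

Definition bitn (i k : nat) : bool := odd (i %/ 2 ^ k).

(* P_{C_k}(b), with P_{C_k}(1) = 1 - P_{C_k}(0) and p k = P_{C_k}(0) *)
Definition PC (R : nzRingType) (m : nat) (p : 'I_m -> R) (k : 'I_m) (b : bool) : R :=
  if b then 1 - p k else p k.

Definition Psym (R : nzRingType) (m : nat) (p : 'I_m -> R) (i : nat) : R :=
  \prod_(k < m) PC p k (bitn i k).

Definition had (R : nzRingType) (m : nat) (i j : nat) : R :=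
  \prod_(k < m) (-1) ^+ (bitn i k && bitn j k).

Definition gamma (R : rcfType) (m : nat) (p : 'I_m -> R) (i j : nat) : R :=
  \prod_(k < m)
    ((-1) ^+ (~~ bitn i k && bitn j k) * Num.sqrt (PC p k false)
     + (-1) ^+ (bitn i k && ~~ bitn j k) * Num.sqrt (PC p k true)).

From Stdlib Require Import PeanoNat.
From mathcomp Require Import all_boot all_order all_algebra.
From mathcomp Require Import zify ring.
Set Implicit Arguments. Unset Strict Implicit. Unset Printing Implicit Defensive.
Import Order.TTheory GRing.Theory Num.Theory.
Local Open Scope ring_scope.

(* gamma_{i,j} and h_{i,j} are products over the bit positions k of factors
   depending only on n_{i,k} and n_{j,k}, so every sum over i < 2^m factorises
   into m sums over a single bit.  With s0 = sqrt P_{C_k}(0) and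
   s1 = sqrt P_{C_k}(1), the one-bit factors form the columns (s0+s1, s0-s1)
   (for n_{j,k} = 0) and (s1-s0, s0+s1) (for n_{j,k} = 1): they are orthogonal
   of squared norm 2 (s0^2 + s1^2) = 2, and the 2x2 Hadamard transform of
   column b has entries 2 (-1)^(a b) s_(a xor b).  Only 0 <= P_{C_k}(0) <= 1 is
   needed. *)

Lemma divn_Natdiv a b : (0 < b)%N -> (a %/ b = Nat.div a b)%N.
Proof.
move=> b_gt0; apply: (Nat.div_unique _ _ _ (a %% b)); last by rewrite {1}(divn_eq a b); lia.
by have := ltn_pmod a b_gt0; lia.
Qed.

Lemma expn_Natpow a b : (a ^ b = Nat.pow a b)%N.
Proof. by elim: b => [|b IHb] //=; rewrite expnS IHb; lia. Qed.

Lemma odd_Natodd a : odd a = Nat.odd a.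
Proof. by elim: a => [|a IHa] //; rewrite Nat.odd_succ -Nat.negb_odd /= IHa. Qed.

Lemma bitn_testbit i k : bitn i k = Nat.testbit i k.
Proof.
rewrite /bitn divn_Natdiv ?expn_gt0 // expn_Natpow odd_Natodd.
by rewrite -Nat.bit0_odd Nat.div_pow2_bits.
Qed.

Lemma bitn_lxor i j k : bitn (Nat.lxor i j) k = bitn i k (+) bitn j k.
Proof. by rewrite !bitn_testbit Nat.lxor_spec; case: Nat.testbit; case: Nat.testbit. Qed.

Lemma bitn_small i k : (i < 2 ^ k)%N -> bitn i k = false.
Proof. by move=> lt_i; rewrite /bitn divn_small. Qed.

Lemma bitn_addn_exp i n : (i < 2 ^ n)%N -> bitn (2 ^ n + i) n = true.
Proof. by move=> lt_i; rewrite /bitn divnDl // divnn expn_gt0 /= divn_small. Qed.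

Lemma bitn_addn_exp_low i n k : (k < n)%N -> bitn (2 ^ n + i) k = bitn i k.
Proof.
move=> lt_kn; rewrite /bitn divnDl ?dvdn_exp2l ?(ltnW lt_kn) //.
rewrite -expnB ?(ltnW lt_kn) // oddD oddX /=.
by have -> : (n - k == 0)%N = false by apply/eqP; lia.
Qed.

Lemma bitn_inj m (i j : 'I_(2 ^ m)) : (forall k : 'I_m, bitn i k = bitn j k) -> i = j.
Proof.
move=> eq_bits; apply/val_inj/Nat.bits_inj => k /=; rewrite -!bitn_testbit.
have [lt_km | le_mk] := ltnP k m; first exact: (eq_bits (Ordinal lt_km)).
have small x : (x < 2 ^ m)%N -> (x < 2 ^ k)%N.
  by move=> lt_x; apply: leq_trans lt_x _; rewrite leq_exp2l.
by rewrite !bitn_small ?small.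
Qed.

(* Indices below 2^(n+1) are split by their bit n into i and 2^n + i, i < 2^n. *)
Lemma sum_prod_bitn (R : comNzRingType) n (F : 'I_n -> bool -> R) :
  \sum_(i < 2 ^ n) \prod_(k < n) F k (bitn i k) = \prod_(k < n) (F k false + F k true).
Proof.
elim: n F => [|n IHn] F; first by rewrite expn0 big_ord1 !big_ord0.
rewrite big_ord_recr /= -(IHn (fun k => F (widen_ord (leqnSn n) k))).
rewrite mulrDr !mulr_suml expnS mul2n -addnn big_split_ord /=.
congr (_ + _); apply: eq_bigr => i _; rewrite big_ord_recr /=.
- by rewrite bitn_small.
- rewrite bitn_addn_exp //; congr (_ * _); apply: eq_bigr => k _.
  by rewrite bitn_addn_exp_low.
Qed.

Lemma sqrtr_prod (R : rcfType) n (f : 'I_n -> R) :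
  (forall k, 0 <= f k) -> Num.sqrt (\prod_(k < n) f k) = \prod_(k < n) Num.sqrt (f k).
Proof.
move=> f_ge0.
suff [] : 0 <= \prod_(k < n) f k /\
          Num.sqrt (\prod_(k < n) f k) = \prod_(k < n) Num.sqrt (f k) by [].
elim/big_rec2: _ => [|k x y _ [x_ge0 <-]]; first by rewrite sqrtr1.
by rewrite mulr_ge0 // sqrtrM.
Qed.

Section GammaFactor.

Variables (R : comNzRingType) (s0 s1 : R).

Definition gamma_factor (a b : bool) : R :=
  (-1) ^+ (~~ a && b) * s0 + (-1) ^+ (a && ~~ b) * s1.

Lemma gamma_factor_orthogonal a b :
  gamma_factor false a * gamma_factor false b + gamma_factor true a * gamma_factor true b
  = (a == b)%:R * (2 * (s0 ^+ 2 + s1 ^+ 2)).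
Proof. by case: a; case: b; rewrite /gamma_factor /= ?expr0 ?expr1; ring. Qed.

Lemma hadamard_gamma_factor a b :
  (-1) ^+ (a && false) * gamma_factor false b + (-1) ^+ (a && true) * gamma_factor true b
  = 2 * (-1) ^+ (b && a) * (if b (+) a then s1 else s0).
Proof. by case: a; case: b; rewrite /gamma_factor /= ?expr0 ?expr1; ring. Qed.

End GammaFactor.

Section Gamma.

Variables (R : rcfType) (m : nat) (p : 'I_m -> R).
Hypothesis p_01 : forall k, 0 <= p k <= 1.

Let s k b := Num.sqrt (PC p k b).
Let g k := gamma_factor (s k false) (s k true).

Lemma gammaE i j : gamma p i j = \prod_(k < m) g k (bitn i k) (bitn j k).
Proof. by []. Qed.

Lemma PC_ge0 k b : 0 <= PC p k b.
Proof. by have /andP[p_ge0 p_le1] := p_01 k; case: b; rewrite /PC ?subr_ge0. Qed.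

Lemma sqr_sqrt_PC k : s k false ^+ 2 + s k true ^+ 2 = 1.
Proof. by rewrite !sqr_sqrtr ?PC_ge0 // /PC addrC subrK. Qed.

Lemma gamma_orthogonal (j l : 'I_(2 ^ m)) :
  \sum_(i < 2 ^ m) gamma p i l * gamma p i j = (j == l)%:R * (2 ^ m)%:R.
Proof.
under eq_bigr do rewrite !gammaE -big_split /=.
rewrite (sum_prod_bitn (fun k a => g k a (bitn l k) * g k a (bitn j k))).
under eq_bigr do rewrite gamma_factor_orthogonal sqr_sqrt_PC mulr1.
have [<- | ne_jl] := eqVneq j l.
  by under eq_bigr do rewrite eqxx mul1r; rewrite prodr_const card_ord natrX mul1r.
have [k /negbTE ne_k] : exists k : 'I_m, bitn j k != bitn l k.
  apply/existsP; apply: contra_neqT ne_jl => /existsPn same_bits.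
  by apply: bitn_inj => k; apply/eqP/negPn/same_bits.
by rewrite (bigD1 k) //= eq_sym ne_k !mul0r.
Qed.

Lemma hadamard_gamma (j l : 'I_(2 ^ m)) :
  \sum_(i < 2 ^ m) had R m l i * gamma p i j
  = (2 ^ m)%:R * had R m j l * Num.sqrt (Psym p (Nat.lxor j l)).
Proof.
under eq_bigr do rewrite gammaE /had -big_split /=.
rewrite (sum_prod_bitn (fun k a => (-1) ^+ (bitn l k && a) * g k a (bitn j k))).
rewrite /Psym sqrtr_prod; last by move=> k; apply: PC_ge0.
rewrite natrX -[X in 2 ^+ X](card_ord m) -prodr_const -!big_split /=.
by apply: eq_bigr => k _; rewrite hadamard_gamma_factor bitn_lxor; case: (_ (+) _).
Qed.

End Gamma.

Theorem lemma1 (R : rcfType) (m : nat) (hm : (1 <= m)%N) (p : 'I_m -> R)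
    (hp : forall k : 'I_m, 0 < p k < 1) (j l : 'I_(2 ^ m)) :
  (\sum_(i < 2 ^ m) gamma p i l * gamma p i j
     = (if j == l then (2 ^ m)%:R else 0))
  /\
  (\sum_(i < 2 ^ m) had R m l i * gamma p i j
     = (2 ^ m)%:R * had R m j l * Num.sqrt (Psym p (Nat.lxor j l))).
Proof.
have p_01 k : 0 <= p k <= 1 by have /andP[/ltW -> /ltW ->] := hp k.
split; last exact: hadamard_gamma.
by rewrite gamma_orthogonal //; case: eqP; rewrite ?mul1r ?mul0r.
Qed.
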